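(* Let $2\le k_1<k_2<\dots<k_m\le n$ ($m\ge1$) and integers $1\le i_{k_j}\le k_j-1$ with $\operatorname{maj}:=\sum_{j=1}^m i_{k_j}\le k_1$. Let $\pi_1=t_{k_1}^{i_{k_1}}\cdot t_{k_2}^{i_{k_2}}\cdots t_{k_m}^{i_{k_m}}\in D_n$ and let $q$ be an integer with $k_m\le q\le n-1$. Then $$\pi_1\cdot w_q=\begin{cases} w_q\cdot \pi_1 & \text{if } \operatorname{maj}=k_1,\\ w_{\operatorname{maj}}\cdot w_q\cdot \pi_1 & \text{if } \operatorname{maj}<k_1.\end{cases}$$
   Context: $D_n$ ($n\ge 2$) is the Coxeter group with generators $s_{1'},s_1,\dots,s_{n-1}$ and relations $s^2=1$, $(s_i s_{i+1})^3=1$, $(s_is_j)^2=1$ for $|i-j|\ge 2$, $(s_{1'}s_2)^3=1$, $(s_{1'}s_i)^2=1$ for $i\ne 2$. For $2\le k\le n$, $t_k=s_1s_2\cdots s_{k-1}$; for $1\le k\le n-1$, $w_k=s_k s_{k-1}\cdots s_2 s_1 s_{1'} s_2\cdots s_k$. (The hypothesis $\sum_j i_{k_j}\le k_1$ says that $\pi_1$, viewed in $S_n$, is a ''standard OGS elementary element'', and $\operatorname{maj}$ is its major index.) *)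

From mathcomp Require Import all_boot all_fingroup.
Set Implicit Arguments. Unset Strict Implicit. Unset Printing Implicit Defensive.
Local Open Scope group_scope.

(* We work with elements
   [s1'] and [s i] (1 <= i <= n-1) of an arbitrary finite group satisfying
   the defining relations of D_n; an identity between words holds in D_n
   iff it holds for every such family (D_n is the universal one, and is finite). *)
Definition Dn_relations (gT : finGroupType) (n : nat) (s1' : gT) (s : nat -> gT) : Prop :=
  s1' ^+ 2 = 1 /\
      (forall i, 1 <= i <= n.-1 -> s i ^+ 2 = 1) /\
      (forall i, 1 <= i -> i.+1 <= n.-1 -> (s i * s i.+1) ^+ 3 = 1) /\
      (forall i j, 1 <= i <= n.-1 -> 1 <= j <= n.-1 -> (i + 2 <= j) || (j + 2 <= i) ->
                    (s i * s j) ^+ 2 = 1) /\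
      (2 <= n.-1 -> (s1' * s 2) ^+ 3 = 1) /\
      (forall i, 1 <= i <= n.-1 -> i != 2 -> (s1' * s i) ^+ 2 = 1).

Definition tD (gT : finGroupType) (s : nat -> gT) (k : nat) : gT :=
  \prod_(1 <= i < k) s i.

(* w_k = s_k s_{k-1} ... s_1 s_{1'} s_2 ... s_k *)
Definition wD (gT : finGroupType) (s1' : gT) (s : nat -> gT) (k : nat) : gT :=
  (\prod_(0 <= j < k) s (k - j)) * s1' * \prod_(2 <= i < k.+1) s i.

(* pi_1 = t_{k_0}^{e_0} t_{k_1}^{e_1} ... t_{k_{m-1}}^{e_{m-1}} *)
Definition pi1D (gT : finGroupType) (s : nat -> gT) (m : nat) (k e : nat -> nat) : gT :=
  \prod_(0 <= j < m) tD s (k j) ^+ e j.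

(** Put [wconj p := s_p ... s_1 w_q s_1 ... s_p] for [0 <= p < q]; these are
   the conjugates of [w_q] by the [t_(p+1)].  By the braid and commutation
   relations, conjugating by [s_i] (1 <= i < q) permutes them, swapping the
   indices [i-1] and [i]; hence conjugating by [t_k] (k <= q) cycles the
   indices [0, ..., k-1], and [t_k^e] adds [e] modulo [k] to an index below
   [k].  Since every [k_j >= k_1] and the exponents add up to at most [k_1],
   only the last factor [t_(k_1)^(i_(k_1))] can wrap around, so
   [pi_1 w_q = wconj (maj mod k_1) pi_1].  Finally [wconj 0 = w_q], and
   [wconj p = w_p w_q] for [1 <= p < q] because [s_(p+1)] conjugates [w_p]
   into [w_(p+1)] and commutes with [w_q]. *)

From mathcomp Require Import all_boot all_fingroup.
From mathcomp Require Import zify.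
Set Implicit Arguments. Unset Strict Implicit. Unset Printing Implicit Defensive.

Definition swap_adj (i p : nat) : nat :=
  if p == i.-1 then i else if p == i then i.-1 else p.

Definition cycle_succ (k p : nat) : nat :=
  if p.+1 == k then 0 else if p < k then p.+1 else p.

Lemma cycle_succ_swap_adj k p :
  1 <= k -> cycle_succ k (swap_adj k p) = cycle_succ k.+1 p.
Proof. by move=> k_gt0; rewrite /cycle_succ /swap_adj; repeat case: ifPn; lia. Qed.

Lemma cycle_succ1 p : cycle_succ 1 p = p.
Proof. by rewrite /cycle_succ; repeat case: ifPn; lia. Qed.

Lemma swap_adj_lt i p r : p < r -> i < r -> swap_adj i p < r.
Proof. by rewrite /swap_adj; repeat case: ifPn; lia. Qed.

Lemma cycle_succE k p : p < k -> cycle_succ k p = p.+1 %% k.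
Proof.
move=> lt_pk; rewrite /cycle_succ lt_pk.
by case: eqP => [->|ne]; [rewrite modnn | rewrite modn_small //; lia].
Qed.

Section InvolutionRelations.
Variable gT : finGroupType.
Local Open Scope group_scope.
Implicit Types x y z : gT.

Lemma invg_sqr1 x : x ^+ 2 = 1 -> x^-1 = x.
Proof. by move=> x2; apply/eqP; rewrite eq_invg_mul -expg2 x2. Qed.

Lemma commute_sqr1 x y :
  x ^+ 2 = 1 -> y ^+ 2 = 1 -> (x * y) ^+ 2 = 1 -> commute x y.
Proof.
move=> x2 y2 /invg_sqr1 xy_inv.
by rewrite /commute -[LHS]xy_inv invMg (invg_sqr1 x2) (invg_sqr1 y2).
Qed.

Lemma braid_sqr1 x y :
  x ^+ 2 = 1 -> y ^+ 2 = 1 -> (x * y) ^+ 3 = 1 -> x * y * x = y * x * y.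
Proof.
move=> x2 y2 xy3; have xyx_inv : (x * y * x)^-1 = y * x * y.
  by apply/eqP; rewrite eq_invg_mul -xy3 !expgS expg0 mulg1 !mulgA.
by rewrite -xyx_inv !invMg (invg_sqr1 x2) (invg_sqr1 y2) mulgA.
Qed.

Lemma commute_braid_conj x y z :
  x * y * x = y * x * y -> commute y z -> commute x (y * (x * z * x) * y).
Proof.
move=> braid yz; rewrite /commute !mulgA braid -(mulgA (y * x) y z) yz mulgA.
have -> : y * x * z * y * x * y = y * x * z * (y * x * y) by rewrite !mulgA.
by rewrite -braid !mulgA.
Qed.

End InvolutionRelations.

Section CoxeterDn.
Variables (gT : finGroupType) (n : nat) (s1' : gT) (s : nat -> gT).
Hypothesis relD : Dn_relations n s1' s.
Local Open Scope group_scope.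

Lemma s1'_sqr1 : s1' ^+ 2 = 1.
Proof. by case: relD. Qed.

Lemma s_sqr1 i : (1 <= i <= n.-1)%N -> s i ^+ 2 = 1.
Proof. by case: relD => _ [s2 _]; apply: s2. Qed.

Lemma s_mulss i : (1 <= i <= n.-1)%N -> s i * s i = 1.
Proof. by move/s_sqr1; rewrite expg2. Qed.

Lemma commute_s i j : (1 <= i <= n.-1)%N -> (1 <= j <= n.-1)%N ->
  (i + 2 <= j)%N || (j + 2 <= i)%N -> commute (s i) (s j).
Proof.
case: relD => _ [_ [_ [sij _]]] hi hj far.
by apply: commute_sqr1; [apply: s_sqr1 | apply: s_sqr1 | apply: sij].
Qed.

Lemma braid_s i : (1 <= i)%N -> (i.+1 <= n.-1)%N ->
  s i * s i.+1 * s i = s i.+1 * s i * s i.+1.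
Proof.
case: relD => _ [_ [sii1 _]] i_ge1 i1_le.
by apply: braid_sqr1; [apply: s_sqr1 | apply: s_sqr1 | apply: sii1]; lia.
Qed.

Lemma commute_s1'_s i : (1 <= i <= n.-1)%N -> i != 2 -> commute s1' (s i).
Proof.
case: relD => _ [_ [_ [_ [_ s1'i]]]] hi i_ne2.
by apply: commute_sqr1; [apply: s1'_sqr1 | apply: s_sqr1 | apply: s1'i].
Qed.

Lemma braid_s1'_s2 : (2 <= n.-1)%N -> s1' * s 2 * s1' = s 2 * s1' * s 2.
Proof.
case: relD => _ [_ [_ [_ [s1'2 _]]]] n_ge3.
by apply: braid_sqr1; [apply: s1'_sqr1 | apply: s_sqr1 | apply: s1'2]; lia.
Qed.

Notation w := (wD s1' s).

Lemma wD1 : w 1 = s 1 * s1'.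
Proof. by rewrite /wD big_nat1 big_geq // mulg1. Qed.

Lemma wDS k : (1 <= k)%N -> w k.+1 = s k.+1 * w k * s k.+1.
Proof.
move=> k_ge1; rewrite /wD big_nat_recl // big_nat_recr //= subn0.
by under eq_bigr => j _ do rewrite subSS; rewrite !mulgA.
Qed.

Lemma commute_s_wD_far k i : (1 <= k)%N -> (k + 2 <= i <= n.-1)%N ->
  commute (s i) (w k).
Proof.
elim: k => [//|[|k] IH] _ hi.
  by rewrite wD1; apply: commuteM; [apply: commute_s | apply/commute_sym/commute_s1'_s]; lia.
by rewrite wDS //; apply: commuteM; first apply: commuteM;
  [apply: commute_s | apply: IH | apply: commute_s]; lia.
Qed.

Lemma commute_s_wD_inner k i : (2 <= i)%N -> (i < k <= n.-1)%N ->
  commute (s i) (w k).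
Proof.
elim: k => [//|k IH] i_ge2 hk; rewrite wDS; last lia.
have [lt_ik | ge_ik] := ltnP i k.
  by apply: commuteM; first apply: commuteM;
    [apply: commute_s | apply: IH | apply: commute_s]; lia.
have -> : i = k by lia.
case: k IH i_ge2 hk ge_ik => [|j] IH i_ge2 hk ge_ik; first lia.
rewrite wDS; last lia.
by apply: commute_braid_conj; [apply: braid_s | apply: commute_s_wD_far]; lia.
Qed.

Lemma conj_s1_wD k : (2 <= k <= n.-1)%N -> s 1 * w k * s 1 = w 1 * w k.
Proof.
elim: k => [//|k IH] hk.
have [k_lt2 | k_ge2] := ltnP k 2.
  have -> : k = 1%N by lia.
  have s1s1' : commute (s 1) s1' by apply/commute_sym/commute_s1'_s; lia.
  rewrite wDS // wD1 !mulgA.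
  have -> : s 1 * s 2 * s 1 * s1' = s 1 * s 2 * s1' * s 1 by rewrite -!mulgA s1s1'.
  have -> : s 1 * s 2 * s1' * s 1 * s 2 * s 1 = s 1 * s 2 * s1' * (s 1 * s 2 * s 1).
    by rewrite !mulgA.
  rewrite braid_s; try lia; rewrite !mulgA.
  have -> : s 1 * s 2 * s1' * s 2 = s 1 * (s 2 * s1' * s 2) by rewrite !mulgA.
  by rewrite -braid_s1'_s2; try lia; rewrite !mulgA -(mulgA _ s1' (s 1)) -s1s1' !mulgA.
rewrite wDS; last lia.
have s1sk : commute (s 1) (s k.+1) by apply: commute_s; lia.
have skw1 : commute (s k.+1) (w 1) by apply: commute_s_wD_far; lia.
have -> : s 1 * (s k.+1 * w k * s k.+1) * s 1 = s k.+1 * (s 1 * w k * s 1) * s k.+1.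
  by rewrite !mulgA s1sk -!mulgA s1sk.
by rewrite IH; [rewrite mulgA skw1 -!(mulgA (w 1)) | lia].
Qed.

Variable q : nat.
Hypotheses (q_ge2 : (2 <= q)%N) (q_le : (q <= n.-1)%N).

Fixpoint wconj (p : nat) : gT := if p is p'.+1 then s p * wconj p' * s p else w q.

Lemma wconjE p : (1 <= p < q)%N -> wconj p = w p * w q.
Proof.
elim: p => [//|[|p] IH] hp; first by rewrite /= conj_s1_wD // q_ge2 q_le.
have sw : commute (s p.+2) (w q) by apply: commute_s_wD_inner; lia.
rewrite [wconj _]/= -/(wconj p.+1) IH; last lia.
by rewrite [w p.+2]wDS // -[RHS]mulgA sw !mulgA.
Qed.

Lemma commute_s_wconj p i : (p < q)%N -> (1 <= i < q)%N -> i != p -> i != p.+1 ->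
  commute (s i) (wconj p).
Proof.
elim/ltn_ind: p i => -[|p] IH i hp hi i_ne_p1 i_ne_p2.
  by apply: commute_s_wD_inner; lia.
have [eq_ip | i_ne_p] := eqVneq i p.
  subst i; case: p IH hp hi i_ne_p1 i_ne_p2 => [|r] IH hp hi _ _; first lia.
  by apply: commute_braid_conj; [apply: braid_s | apply: IH]; lia.
by apply: commuteM; first apply: commuteM;
  [apply: commute_s | apply: IH | apply: commute_s]; lia.
Qed.

Lemma s_wconj i p : (1 <= i < q)%N -> (p < q)%N ->
  s i * wconj p = wconj (swap_adj i p) * s i.
Proof.
case: i => [//|i] hi hp; rewrite /swap_adj /=.
have [-> | ne_ip] := eqVneq p i.
  by rewrite /= -[RHS]mulgA s_mulss ?mulg1 //; lia.
have [-> | ne_ip1] := eqVneq p i.+1.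
  by rewrite /= !mulgA s_mulss ?mul1g //; lia.
by apply: commute_s_wconj; rewrite // eq_sym.
Qed.

Lemma tD_wconj k p : (1 <= k <= q)%N -> (p < q)%N ->
  tD s k * wconj p = wconj (cycle_succ k p) * tD s k.
Proof.
elim: k p => [//|[|k] IH] p hk hp.
  by rewrite /tD big_geq // mul1g mulg1 cycle_succ1.
rewrite /tD big_nat_recr //= -/(tD s k.+1) -mulgA s_wconj; try lia.
rewrite mulgA IH; try lia; last by apply: swap_adj_lt; lia.
by rewrite cycle_succ_swap_adj // mulgA.
Qed.

Lemma tDX_wconj k e p : (p < k <= q)%N ->
  tD s k ^+ e * wconj p = wconj ((p + e) %% k) * tD s k ^+ e.
Proof.
elim: e p => [|e IH] p hp; first by rewrite addn0 modn_small ?expg0 ?mul1g ?mulg1 //; lia.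
rewrite expgSr -mulgA tD_wconj; try lia.
rewrite mulgA IH; last by rewrite cycle_succE ?ltn_pmod; lia.
by rewrite cycle_succE; [rewrite modnDml addSnnS -mulgA -expgSr | lia].
Qed.

Lemma pi1D_wconj m (k e : nat -> nat) p :
  (p < k 0)%N -> (p + \sum_(0 <= j < m) e j <= k 0)%N ->
  (forall j, j < m -> k 0 <= k j <= q)%N -> (0 < m -> 0 < e 0)%N ->
  pi1D s m k e * wconj p = wconj ((p + \sum_(0 <= j < m) e j) %% k 0) * pi1D s m k e.
Proof.
elim: m p => [|m IH] p hp hsum hk he0.
  by rewrite /pi1D !big_geq // addn0 modn_small // mul1g mulg1.
have hkm := hk m (ltnSn m).
rewrite /pi1D big_nat_recr //= -/(pi1D s m k e) -mulgA tDX_wconj; last lia.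
rewrite big_nat_recr //= addnA addnAC in hsum *.
set S := \sum_(0 <= j < m) e j in hsum *.
have [lt_p' le_p'S Ep'] : [/\ (p + e m) %% k m < k 0,
    (p + e m) %% k m + S <= k 0 & ((p + e m) %% k m + S) %% k 0 = (p + e m + S) %% k 0]%N.
  have [m0 | m_gt0] := posnP m.
    by subst m; rewrite /S big_geq // !addn0 modn_mod ltn_mod; split => //; lia.
  have e0_le_S : (e 0 <= S)%N by rewrite /S big_ltn // leq_addr.
  by have := he0 isT; rewrite modn_small; [split | ]; lia.
rewrite mulgA IH //; first by rewrite Ep' -mulgA.
- by move=> j lt_jm; apply: hk; lia.
- by move=> m_gt0; apply: he0.
Qed.
End CoxeterDn.

Lemma incr_bounds (k : nat -> nat) m : (forall j, j.+1 < m -> k j < k j.+1) ->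
  forall j, j < m -> k 0 <= k j <= k m.-1.
Proof.
move=> k_incr; have k_mono : {in gtn m &, {homo k : i j / i <= j}}.
  apply: homo_leq_in => [//|? ? ?|i j _ /[!inE] lt_jm l /andP[_ lt_lj]|i _ /[!inE] ?].
  - exact: leq_trans.
  - by rewrite inE (ltn_trans lt_lj lt_jm).
  - exact/ltnW/k_incr.
by move=> j lt_jm; rewrite !k_mono ?inE //; lia.
Qed.

Theorem mainTheorem7 (gT : finGroupType) (n : nat) (s1' : gT) (s : nat -> gT)
    (m : nat) (k e : nat -> nat) (q : nat) :
  2 <= n ->
  Dn_relations n s1' s ->
  0 < m ->
  2 <= k 0 ->
  (forall j, j.+1 < m -> k j < k j.+1) ->
  k m.-1 <= n ->
  (forall j, j < m -> 1 <= e j <= (k j).-1) ->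
  (\sum_(0 <= j < m) e j <= k 0)%N ->
  k m.-1 <= q <= n.-1 ->
  (pi1D s m k e * wD s1' s q)%g =
    (if (\sum_(0 <= j < m) e j == k 0)%N
     then wD s1' s q * pi1D s m k e
     else wD s1' s (\sum_(0 <= j < m) e j) * wD s1' s q * pi1D s m k e)%g.
Proof.
move=> _ relD m_gt0 k0_ge2 k_incr _ he sum_le /andP[km_le_q q_le].
have k_bounds j : j < m -> k 0 <= k j <= q by move/(incr_bounds k_incr); lia.
have /andP[_ k0_le_q] := k_bounds 0 m_gt0.
have /andP[e0_gt0 _] := he 0 m_gt0.
have q_ge2 : 2 <= q by lia.
have e0_le_sum : e 0 <= \sum_(0 <= j < m) e j by rewrite big_ltn // leq_addr.
have := pi1D_wconj relD q_ge2 q_le (ltnW k0_ge2) sum_le k_bounds (fun _ => e0_gt0).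
rewrite add0n => ->; case: eqP => [-> | sum_ne]; first by rewrite modnn.
by rewrite modn_small ?(wconjE relD q_ge2 q_le) //; lia.
Qed.
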